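(* Let $R$ be a ring and let $n\geq 2$ be a fixed integer. If $x^n-x$ is nilpotent for every $x\in R$, then $R$ is D-regularly nil clean.
   Context: All rings are associative with identity $1\neq 0$. A ring $R$ is called D-regularly nil clean if for each $a\in R$ there exists an idempotent $e\in aRa$ such that $a(1-e)$ is nilpotent. *)

From mathcomp Require Import all_boot all_algebra.
Set Implicit Arguments. Unset Strict Implicit. Unset Printing Implicit Defensive.
Import GRing.Theory.
Local Open Scope ring_scope.

Definition nilpotent_elt (R : nzRingType) (x : R) : Prop :=
  exists k : nat, x ^+ k = 0.

Definition idempotent_elt (R : nzRingType) (e : R) : Prop := e * e = e.

Definition D_regularly_nil_clean (R : nzRingType) : Prop :=
  forall a : R, exists e : R,
    (exists r : R, e = a * r * a) /\ idempotent_elt e /\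
    nilpotent_elt (a * (1 - e)).

From mathcomp Require Import all_boot all_algebra.
From mathcomp Require Import ring zify.
Local Open Scope ring_scope.
Import GRing.Theory.

(** Everything happens in the commutative ring [{poly int}], evaluated at [a].
    Put [u = X^(n-1)] and [t = 1 - u], so that [u + t = 1] and
    [X t = X - X^n].  A Bezout relation [u^K p + t^K q = 1] with [K = m + 2]
    makes [e = u^K p] a multiple of [X^2] that is idempotent modulo
    [(X - X^n)^m], since [e - e^2 = u^K p t^K q]; and [X (1 - e) = X t^K q]
    is a multiple of [X t], so its [m]-th power is divisible by [(X - X^n)^m].
    Both multiples vanish at [a] because [(a^n - a)^m = 0]. *)

Lemma bezout_exprs (S : comNzRingType) (s t : S) (k : nat) :
  s + t = 1 -> exists p q : S, s ^+ k * p + t ^+ k * q = 1.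
Proof.
move=> st1.
have pow2 j : exists p q : S, s ^+ (2 ^ j) * p + t ^+ (2 ^ j) * q = 1.
  elim: j => [|j [p [q IH]]]; first by exists 1, 1; rewrite !mulr1.
  (* [1 = (A + B)^3 = A^2 (A + 3B) + B^2 (3A + B)] doubles the exponents. *)
  set A := s ^+ (2 ^ j) * p in IH; set B := t ^+ (2 ^ j) * q in IH.
  exists (p ^+ 2 * (A + 3%:R * B)), (q ^+ 2 * (3%:R * A + B)).
  rewrite expnS mul2n -addnn !exprD.
  transitivity ((A + B) ^+ 3); last by rewrite IH expr1n.
  by rewrite /A /B; ring.
have [p [q spq]] := pow2 k.
have k_le : (k <= 2 ^ k)%N by apply/ltnW/ltn_expl.
exists (s ^+ (2 ^ k - k) * p), (t ^+ (2 ^ k - k) * q).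
by rewrite !mulrA -!exprD subnKC.
Qed.

Lemma dregular_nil_clean_mod (S : comNzRingType) (n m : nat) (x : S) :
  (2 <= n)%N ->
  exists e r c1 c2 : S,
    [/\ e = x * r * x, e * e - e = (x - x ^+ n) ^+ m * c1
      & (x * (1 - e)) ^+ m = (x - x ^+ n) ^+ m * c2].
Proof.
move=> n_ge2.
set u := x ^+ n.-1; set t : S := 1 - u; set K := (m + 2)%N.
have x_mul_t : x * t = x - x ^+ n.
  by rewrite /t /u mulrBr mulr1 -exprS prednK //; lia.
have [p [q upq]] : exists p q, u ^+ K * p + t ^+ K * q = 1.
  by apply: bezout_exprs; rewrite addrC subrK.
set e := u ^+ K * p.
have one_sub_e : 1 - e = t ^+ K * q by rewrite -upq addrC addKr.
have uK j : (j <= n.-1 * K)%N -> u ^+ K = x ^+ j * x ^+ (n.-1 * K - j).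
  by move=> j_le; rewrite -exprD subnKC // /u -exprM.
exists e, (x ^+ (n.-1 * K - 2) * p).
exists (- (x ^+ (n.-1 * K - m) * t ^+ 2 * p * q)).
exists ((t ^+ m.+1 * q) ^+ m).
split.
- rewrite /e (uK 2%N); last by nia.
  by rewrite expr2; ring.
- have -> : e * e - e = - (e * (1 - e)) by ring.
  rewrite one_sub_e -x_mul_t /e (uK m); last by nia.
  by rewrite /K exprD exprMn; ring.
- rewrite one_sub_e -x_mul_t -exprMn; congr (_ ^+ m).
  by rewrite /K addn2 exprS !mulrA.
Qed.

Lemma eval_poly_int_rmorph (R : nzRingType) (a : R) :
  exists phi : {rmorphism {poly int} -> R}, phi 'X = a.
Proof.
pose cfu : commr_rmorph (intr : int -> R) a := fun k => commr_int a k.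
by exists (horner_morph cfu); apply: horner_morphX.
Qed.

Theorem corollary2p8 (R : nzRingType) (n : nat) (hn : (2 <= n)%N)
  (H : forall x : R, nilpotent_elt (x ^+ n - x)) :
  D_regularly_nil_clean R.
Proof.
move=> a; have [m am0] := H a.
have [phi phiX] := eval_poly_int_rmorph _ a.
have [e [r [c1 [c2 [-> e_idem xe_nil]]]]] := dregular_nil_clean_mod {poly int} n m 'X hn.
have phi_d c : phi (('X - 'X ^+ n) ^+ m * c) = 0.
  by rewrite rmorphM rmorphXn rmorphB rmorphXn phiX -opprB exprNn am0 !mulr0 mul0r.
exists (a * phi r * a); split; [by exists (phi r) | split].
- rewrite /idempotent_elt; apply/eqP; rewrite -subr_eq0 -phiX -!rmorphM -rmorphB.
  by rewrite e_idem phi_d.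
- by exists m; rewrite -phiX -(rmorph1 phi) -!rmorphM -rmorphB -rmorphM -rmorphXn xe_nil phi_d.
Qed.
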